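(* With the notation of the context, for all fixed frequencies, $$|S^{\rm good}_{kk_2}|\lesssim1,\qquad |S^{\rm good}_{k_1k_3}|\lesssim1,\qquad |S^{\rm bad}_{kk_2}|\lesssim|k+k_2|^{1-\frac\alpha2}+1,\qquad |S^{\rm bad}_{k_1k_3}|\lesssim|k_1+k_3|^{1-\frac\alpha2}+1.$$
   Context: Fix $\alpha\in(1,2)$, dyadic numbers $1\le N_1,N_2,N_3\le N$, a real number $m$ and a constant $C_0>0$. Let $S$ be the set of $(k,k_1,k_2,k_3)\in\mathbb Z^4$ with $k=k_1-k_2+k_3$, $k_2\notin\{k_1,k_3\}$, $\big||k_1|^\alpha-|k_2|^\alpha+|k_3|^\alpha-|k|^\alpha-m\big|\le C_0$, $|k|\le N$ and $|k_j|\le N_j$ for $j=1,2,3$. Let $S_{k_1k_3}=\{(k,k_2):(k,k_1,k_2,k_3)\in S\}$ and $S_{kk_2}=\{(k_1,k_3):(k,k_1,k_2,k_3)\in S\}$. Fix a small absolute constant $c\in(0,1)$ and set $S^{\rm bad}_{k_1k_3}=\{(k,k_2)\in S_{k_1k_3}:|2k-(k_1+k_3)|<c|k_1+k_3|\}$, $S^{\rm good}_{k_1k_3}=S_{k_1k_3}\setminus S^{\rm bad}_{k_1k_3}$, $S^{\rm bad}_{kk_2}=\{(k_1,k_3)\in S_{kk_2}:|2k_1-(k+k_2)|<c|k+k_2|\}$, $S^{\rm good}_{kk_2}=S_{kk_2}\setminus S^{\rm bad}_{kk_2}$. $|A|$ is cardinality. $A\lesssim B$ means $A\le CB$ with $C$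 depending only on $\alpha$, $c$ and $C_0$. *)

From Stdlib Require Import Reals ZArith List.
Import ListNotations.
Open Scope R_scope.

(* |x|^a for an integer x, with the convention 0^a = 0 (a > 0 throughout). *)
Definition zpow (x : Z) (a : R) : R :=
  if Z.eqb x 0 then 0 else Rpower (IZR (Z.abs x)) a.

Definition dyadic (N : Z) : Prop := exists n : nat, N = (2 ^ Z.of_nat n)%Z.

(* Cardinality bound |A| <= C for an arbitrary set A of integer pairs:
   every duplicate-free list of elements of A has length at most C. *)
Definition card_le (A : Z * Z -> Prop) (C : R) : Prop :=
  forall l : list (Z * Z), NoDup l -> (forall x, In x l -> A x) ->
    INR (length l) <= C.

Definition inS (alpha C0 m : R) (N N1 N2 N3 : Z) (k k1 k2 k3 : Z) : Prop :=
  k = (k1 - k2 + k3)%Z /\ k2 <> k1 /\ k2 <> k3 /\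
  Rabs (zpow k1 alpha - zpow k2 alpha + zpow k3 alpha - zpow k alpha - m) <= C0 /\
  (Z.abs k <= N)%Z /\ (Z.abs k1 <= N1)%Z /\ (Z.abs k2 <= N2)%Z /\ (Z.abs k3 <= N3)%Z.

Definition S_k1k3_bad alpha C0 m N N1 N2 N3 c (k1 k3 : Z) (p : Z * Z) : Prop :=
  let (k, k2) := p in
  inS alpha C0 m N N1 N2 N3 k k1 k2 k3 /\
  Rabs (IZR (2 * k - (k1 + k3))) < c * Rabs (IZR (k1 + k3)).

Definition S_k1k3_good alpha C0 m N N1 N2 N3 c (k1 k3 : Z) (p : Z * Z) : Prop :=
  let (k, k2) := p in
  inS alpha C0 m N N1 N2 N3 k k1 k2 k3 /\
  ~ (Rabs (IZR (2 * k - (k1 + k3))) < c * Rabs (IZR (k1 + k3))).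

Definition S_kk2_bad alpha C0 m N N1 N2 N3 c (k k2 : Z) (p : Z * Z) : Prop :=
  let (k1, k3) := p in
  inS alpha C0 m N N1 N2 N3 k k1 k2 k3 /\
  Rabs (IZR (2 * k1 - (k + k2))) < c * Rabs (IZR (k + k2)).

Definition S_kk2_good alpha C0 m N N1 N2 N3 c (k k2 : Z) (p : Z * Z) : Prop :=
  let (k1, k3) := p in
  inS alpha C0 m N N1 N2 N3 k k1 k2 k3 /\
  ~ (Rabs (IZR (2 * k1 - (k + k2))) < c * Rabs (IZR (k + k2))).

(* Fix one pair of frequencies, say (k, k2), and put s = k + k2.  Every
   (k1, k3) in S_{kk2} has k3 = s - k1, and the resonance condition says that
   F(k1) = |k1|^a + |s - k1|^a lies within C0 of a level depending only on
   (k, k2, m); the same holds for S_{k1k3} with s = k1 + k3.  Writing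
   sg = |s| and t = |2 k1 - s|, F(k1) = pair_pow a sg t, which is increasing
   in t >= 0.  Two members of a fibre therefore have pair_pow values within
   2 C0, and the argument reduces to lower bounds on the growth in t:
   - away from the diagonal (t >= c sg) the growth is linear with a slope
     depending only on a and c, so t ranges over a window of width O(1);
   - near the diagonal (t < c sg) convexity gives growth of order
     sg^(a-2) (v^2 - u^2), so t ranges over a window of width O(sg^(1-a/2)).
   A window of width M for t leaves at most 4 M + 6 integer values of k1. *)

From Stdlib Require Import Reals ZArith List Lra Lia.
Open Scope R_scope.

Lemma Rpower_pos x g : 0 < Rpower x g.
Proof. unfold Rpower; apply exp_pos. Qed.

Lemma Rpower_base_1 g : Rpower 1 g = 1.
Proof. unfold Rpower; rewrite ln_1, Rmult_0_r, exp_0; reflexivity. Qed.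

Lemma Rpower_antimono a b g : 0 < a <= b -> g <= 0 -> Rpower b g <= Rpower a g.
Proof.
  intros Hab Hg.
  rewrite <- (Ropp_involutive g), (Rpower_Ropp b (- g)), (Rpower_Ropp a (- g)).
  apply Rinv_le_contravar; [apply Rpower_pos|].
  apply Rle_Rpower_l; lra.
Qed.

Lemma Rpower_ge_1 x g : 1 <= x -> 0 <= g -> 1 <= Rpower x g.
Proof. intros; rewrite <- (Rpower_base_1 g); apply Rle_Rpower_l; lra. Qed.

Lemma Rpower_le_1 x g : 0 < x <= 1 -> 0 <= g -> Rpower x g <= 1.
Proof. intros; rewrite <- (Rpower_base_1 g); apply Rle_Rpower_l; lra. Qed.

Lemma Rpower_succ x g : 0 < x -> Rpower x (g + 1) = Rpower x g * x.
Proof. intros; rewrite Rpower_plus, Rpower_1; auto. Qed.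

Lemma Rpower_mvt x y g : 0 < y < x ->
  exists xi, y < xi < x /\ Rpower x g - Rpower y g = g * Rpower xi (g - 1) * (x - y).
Proof.
  intros H.
  destruct (MVT_cor2 (fun z => Rpower z g) (fun z => g * Rpower z (g - 1)) y x)
    as [xi [E Hxi]]; [lra| |].
  - intros z Hz; apply derivable_pt_lim_power; lra.
  - exists xi; split; auto.
Qed.

(* Increment bounds for x ^ g from the mean value theorem: for g >= 1 the
   derivative is nondecreasing, for 0 <= g <= 1 it is nonincreasing. *)
Lemma Rpower_incr_ge_convex x y g : 0 < y < x -> 1 <= g ->
  Rpower x g - Rpower y g >= g * Rpower y (g - 1) * (x - y).
Proof.
  intros H Hg; destruct (Rpower_mvt x y g H) as [xi [Hxi E]]; rewrite E.
  assert (Rpower y (g - 1) <= Rpower xi (g - 1)) by (apply Rle_Rpower_l; lra).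
  assert (0 <= g * (Rpower xi (g - 1) - Rpower y (g - 1)) * (x - y))
    by (repeat apply Rmult_le_pos; lra).
  nra.
Qed.

Lemma Rpower_incr_le_convex x y g : 0 < y < x -> 1 <= g ->
  Rpower x g - Rpower y g <= g * Rpower x (g - 1) * (x - y).
Proof.
  intros H Hg; destruct (Rpower_mvt x y g H) as [xi [Hxi E]]; rewrite E.
  assert (Rpower xi (g - 1) <= Rpower x (g - 1)) by (apply Rle_Rpower_l; lra).
  assert (0 <= g * (Rpower x (g - 1) - Rpower xi (g - 1)) * (x - y))
    by (repeat apply Rmult_le_pos; lra).
  nra.
Qed.

Lemma Rpower_incr_ge_concave x y g : 0 < y < x -> 0 <= g <= 1 ->
  Rpower x g - Rpower y g >= g * Rpower x (g - 1) * (x - y).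
Proof.
  intros H Hg; destruct (Rpower_mvt x y g H) as [xi [Hxi E]]; rewrite E.
  assert (Rpower x (g - 1) <= Rpower xi (g - 1)) by (apply Rpower_antimono; lra).
  assert (0 <= g * (Rpower xi (g - 1) - Rpower x (g - 1)) * (x - y))
    by (repeat apply Rmult_le_pos; lra).
  nra.
Qed.

Definition apow (a x : R) : R :=
  if Req_dec_T x 0 then 0 else Rpower (Rabs x) a.

(* |j| ^ a + |s - j| ^ a, written in terms of sg = |s| and t = |2j - s|:
   the two frequencies are (sg + t) / 2 and (sg - t) / 2 up to sign. *)
Definition pair_pow (a sg t : R) : R := apow a ((sg + t) / 2) + apow a ((sg - t) / 2).

Lemma apow_pos a x : 0 < x -> apow a x = Rpower x a.
Proof.
  intros; unfold apow; destruct (Req_dec_T x 0); [lra|].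
  rewrite Rabs_right; lra.
Qed.

Lemma apow_0 a : apow a 0 = 0.
Proof. unfold apow; destruct (Req_dec_T 0 0); lra. Qed.

Lemma apow_opp a x : apow a (- x) = apow a x.
Proof.
  unfold apow; destruct (Req_dec_T (- x) 0), (Req_dec_T x 0); try lra.
  rewrite Rabs_Ropp; reflexivity.
Qed.

Lemma apow_mono a x y : 0 <= a -> Rabs x <= Rabs y -> apow a x <= apow a y.
Proof.
  intros Ha H; unfold apow; destruct (Req_dec_T x 0), (Req_dec_T y 0).
  - lra.
  - left; apply Rpower_pos.
  - subst; rewrite Rabs_R0 in H.
    pose proof (Rabs_pos x); pose proof (Rabs_pos_lt x n); lra.
  - apply Rle_Rpower_l; auto; split; auto; apply Rabs_pos_lt; auto.
Qed.

Lemma zpow_apow z a : zpow z a = apow a (IZR z).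
Proof.
  unfold zpow, apow.
  destruct (Z.eqb_spec z 0), (Req_dec_T (IZR z) 0).
  - reflexivity.
  - subst; simpl in n; lra.
  - apply eq_IZR in e; contradiction.
  - rewrite abs_IZR; reflexivity.
Qed.

Lemma zpow_nonneg z g : 0 <= zpow z g.
Proof. unfold zpow; destruct (z =? 0)%Z; [lra | left; apply Rpower_pos]. Qed.

Lemma apow_pair a s x : apow a x + apow a (s - x) = pair_pow a (Rabs s) (Rabs (2 * x - s)).
Proof.
  unfold pair_pow.
  destruct (Rcase_abs s) as [Hs|Hs]; destruct (Rcase_abs (2 * x - s)) as [Ht|Ht];
    rewrite ?(Rabs_left s), ?(Rabs_right s), ?(Rabs_left (2 * x - s)),
      ?(Rabs_right (2 * x - s)) by lra.
  - replace ((- s + - (2 * x - s)) / 2) with (- x) by lra.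
    replace ((- s - - (2 * x - s)) / 2) with (- (s - x)) by lra.
    rewrite !apow_opp; lra.
  - replace ((- s + (2 * x - s)) / 2) with (- (s - x)) by lra.
    replace ((- s - (2 * x - s)) / 2) with (- x) by lra.
    rewrite !apow_opp; lra.
  - replace ((s + - (2 * x - s)) / 2) with (s - x) by lra.
    replace ((s - - (2 * x - s)) / 2) with x by lra; lra.
  - replace ((s + (2 * x - s)) / 2) with x by lra.
    replace ((s - (2 * x - s)) / 2) with (s - x) by lra; lra.
Qed.

Lemma zpow_pair a s j :
  zpow j a + zpow (s - j) a = pair_pow a (IZR (Z.abs s)) (IZR (Z.abs (2 * j - s))).
Proof. rewrite !zpow_apow, !abs_IZR, !minus_IZR, mult_IZR; apply apow_pair. Qed.

Section Growth.

Variables a c : R.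
Hypothesis Ha : 1 < a <= 2.
Hypothesis Hc : 0 < c < 1.

Definition half_pow : R := Rpower (1 / 2) (a - 1).

(* Lower bound for the slope of t |-> pair_pow a sg t away from the diagonal. *)
Definition good_slope : R := (a - 1) * c * half_pow / 2.

Lemma half_pow_bounds : 0 < half_pow <= 1.
Proof. unfold half_pow; split; [apply Rpower_pos | apply Rpower_le_1; lra]. Qed.

Lemma good_slope_pos : 0 < good_slope.
Proof.
  unfold good_slope; pose proof half_pow_bounds.
  assert (0 < (a - 1) * c) by nra; assert (0 < (a - 1) * c * half_pow) by nra; lra.
Qed.

(* Second-order growth below the diagonal t = sg: by convexity of x ^ a and
   concavity of x ^ (a - 1), the increment from u to v is at least
   a (a - 1) sg ^ (a - 2) u (v - u) / 2. *)
Lemma pair_pow_second_order sg u v : 0 <= u < v -> v < sg ->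
  pair_pow a sg v - pair_pow a sg u >= a * (a - 1) * Rpower sg (a - 1 - 1) * u * ((v - u) / 2).
Proof.
  intros Hu Hv; unfold pair_pow.
  set (au := (sg + u) / 2); set (av := (sg + v) / 2).
  set (bu := (sg - u) / 2); set (bv := (sg - v) / 2).
  assert (0 < bv) by (unfold bv; lra). assert (bv < bu) by (unfold bv, bu; lra).
  assert (bu <= au) by (unfold au, bu; lra). assert (au < av) by (unfold au, av; lra).
  assert (au <= sg) by (unfold au; lra).
  rewrite !apow_pos by lra.
  pose proof (Rpower_incr_ge_convex av au a ltac:(lra) ltac:(lra)) as Hplus.
  pose proof (Rpower_incr_le_convex bu bv a ltac:(lra) ltac:(lra)) as Hminus.
  assert (Hderiv : Rpower au (a - 1) - Rpower bu (a - 1) >= (a - 1) * Rpower sg (a - 1 - 1) * u).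
  { destruct (Req_dec_T u 0) as [->|Hu0].
    - replace au with bu by (unfold au, bu; lra); lra.
    - pose proof (Rpower_incr_ge_concave au bu (a - 1) ltac:(unfold au, bu; lra) ltac:(lra)) as Hconc.
      assert (Rpower sg (a - 1 - 1) <= Rpower au (a - 1 - 1)) by (apply Rpower_antimono; lra).
      replace (au - bu) with u in Hconc by (unfold au, bu; lra).
      assert (0 <= (a - 1) * (Rpower au (a - 1 - 1) - Rpower sg (a - 1 - 1)) * u)
        by (repeat apply Rmult_le_pos; lra).
      nra. }
  replace (av - au) with ((v - u) / 2) in Hplus by (unfold av, au; lra).
  replace (bu - bv) with ((v - u) / 2) in Hminus by (unfold bu, bv; lra).
  assert (0 <= a * ((v - u) / 2) * (Rpower au (a - 1) - Rpower bu (a - 1)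
                                      - (a - 1) * Rpower sg (a - 1 - 1) * u))
    by (repeat apply Rmult_le_pos; lra).
  nra.
Qed.

Lemma pair_pow_gap_inner sg u v : 1 <= u < v -> v < sg -> c * sg <= u ->
  pair_pow a sg v - pair_pow a sg u >= good_slope * (v - u).
Proof.
  intros Hu Hv Hcu.
  pose proof (pair_pow_second_order sg u v ltac:(lra) Hv) as H.
  pose proof half_pow_bounds.
  assert (Hpow : Rpower sg (a - 1 - 1) * sg = Rpower sg (a - 1)).
  { rewrite <- Rpower_succ by lra; f_equal; ring. }
  assert (1 <= Rpower sg (a - 1)) by (apply Rpower_ge_1; lra).
  pose proof (Rpower_pos sg (a - 1 - 1)).
  assert (Hcu' : c <= Rpower sg (a - 1 - 1) * u).
  { assert (Rpower sg (a - 1 - 1) * (c * sg) <= Rpower sg (a - 1 - 1) * u)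
      by (apply Rmult_le_compat_l; lra).
    nra. }
  unfold good_slope.
  assert (a * (a - 1) * Rpower sg (a - 1 - 1) * u >= (a - 1) * c * half_pow).
  { assert ((a - 1) * c * half_pow <= (a - 1) * c) by (assert (0 <= (a - 1) * c) by nra; nra).
    assert ((a - 1) * c <= (a - 1) * (Rpower sg (a - 1 - 1) * u))
      by (apply Rmult_le_compat_l; lra).
    assert (0 <= (a - 1) * (Rpower sg (a - 1 - 1) * u)) by nra.
    nra. }
  assert (0 <= (a * (a - 1) * Rpower sg (a - 1 - 1) * u - (a - 1) * c * half_pow) * ((v - u) / 2))
    by (apply Rmult_le_pos; lra).
  nra.
Qed.

Lemma pair_pow_gap_to_edge sg u : 1 <= u < sg ->
  pair_pow a sg sg - pair_pow a sg u >= good_slope * (sg - u).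
Proof.
  intros Hu; unfold pair_pow.
  replace ((sg - sg) / 2) with 0 by lra; replace ((sg + sg) / 2) with sg by lra.
  set (au := (sg + u) / 2); set (bu := (sg - u) / 2).
  assert (0 < bu) by (unfold bu; lra). assert (bu <= au) by (unfold bu, au; lra).
  assert (1 <= au) by (unfold au; lra). assert (au < sg) by (unfold au; lra).
  rewrite apow_0, !apow_pos by lra.
  pose proof (Rpower_incr_ge_convex sg au a ltac:(lra) ltac:(lra)) as Hplus.
  replace (sg - au) with bu in Hplus by (unfold bu, au; lra).
  assert (Hsucc : Rpower bu a = Rpower bu (a - 1) * bu)
    by (rewrite <- Rpower_succ by lra; f_equal; ring).
  assert (Rpower bu (a - 1) <= Rpower au (a - 1)) by (apply Rle_Rpower_l; lra).
  assert (1 <= Rpower au (a - 1)) by (apply Rpower_ge_1; lra).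
  pose proof half_pow_bounds.
  rewrite Hsucc; unfold good_slope; replace (sg - u) with (2 * bu) by (unfold bu; lra).
  assert (0 <= (Rpower au (a - 1) - Rpower bu (a - 1)) * bu) by (apply Rmult_le_pos; lra).
  assert (0 <= (a - 1) * (Rpower au (a - 1) - 1) * bu) by (repeat apply Rmult_le_pos; lra).
  assert (0 <= (a - 1) * (1 - c * half_pow) * bu).
  { repeat apply Rmult_le_pos; try lra.
    assert (c * half_pow <= 1 * 1) by (apply Rmult_le_compat; lra); lra. }
  nra.
Qed.

Lemma pair_pow_gap_outer sg u v : 0 <= sg <= u -> 1 <= u < v ->
  pair_pow a sg v - pair_pow a sg u >= good_slope * (v - u).
Proof.
  intros Hs Hu; unfold pair_pow.
  set (au := (sg + u) / 2); set (av := (sg + v) / 2).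
  assert (1 / 2 <= au) by (unfold au; lra). assert (au < av) by (unfold au, av; lra).
  assert (apow a ((sg - u) / 2) <= apow a ((sg - v) / 2)).
  { apply apow_mono; [lra|]; rewrite !Rabs_left1 by lra; lra. }
  rewrite (apow_pos a au), (apow_pos a av) by lra.
  pose proof (Rpower_incr_ge_convex av au a ltac:(lra) ltac:(lra)) as Hplus.
  replace (av - au) with ((v - u) / 2) in Hplus by (unfold av, au; lra).
  assert (half_pow <= Rpower au (a - 1)) by (unfold half_pow; apply Rle_Rpower_l; lra).
  pose proof half_pow_bounds.
  unfold good_slope.
  assert (0 <= a * (Rpower au (a - 1) - half_pow) * ((v - u) / 2))
    by (repeat apply Rmult_le_pos; lra).
  assert (0 <= (a - (a - 1) * c) * half_pow * ((v - u) / 2)).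
  { repeat apply Rmult_le_pos; try lra.
    assert ((a - 1) * c <= (a - 1) * 1) by (apply Rmult_le_compat_l; lra); lra. }
  nra.
Qed.

Lemma pair_pow_gap_from_zero v : 1 <= v ->
  pair_pow a 0 v - pair_pow a 0 0 >= good_slope * (v - 0).
Proof.
  intros Hv; unfold pair_pow.
  replace ((0 + 0) / 2) with 0 by lra; replace ((0 - 0) / 2) with 0 by lra.
  replace ((0 - v) / 2) with (- ((0 + v) / 2)) by lra.
  rewrite apow_opp, apow_0, apow_pos by lra.
  assert (Hsucc : Rpower ((0 + v) / 2) a = Rpower ((0 + v) / 2) (a - 1) * ((0 + v) / 2))
    by (rewrite <- Rpower_succ by lra; f_equal; ring).
  assert (half_pow <= Rpower ((0 + v) / 2) (a - 1))
    by (unfold half_pow; apply Rle_Rpower_l; lra).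
  pose proof half_pow_bounds.
  rewrite Hsucc; unfold good_slope.
  assert (0 <= (Rpower ((0 + v) / 2) (a - 1) - half_pow) * v) by (apply Rmult_le_pos; lra).
  assert (0 <= (1 - (a - 1) * c / 2) * half_pow * v).
  { repeat apply Rmult_le_pos; try lra.
    assert ((a - 1) * c <= 1 * 1) by (apply Rmult_le_compat; lra); lra. }
  nra.
Qed.

(* Linear growth of t |-> pair_pow a sg t on the good region t >= c sg, for
   the integer-like values (0 or >= 1) that arise from frequencies. *)
Lemma pair_pow_gap sg u v : (sg = 0 \/ 1 <= sg) -> (u = 0 \/ 1 <= u) ->
  u < v -> 1 <= v -> c * sg <= u ->
  pair_pow a sg v - pair_pow a sg u >= good_slope * (v - u).
Proof.
  intros Hs [->|Hu] Huv Hv Hcu.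
  - assert (sg = 0) as -> by (destruct Hs; nra).
    apply pair_pow_gap_from_zero; auto.
  - destruct (Rlt_or_le v sg) as [Hvs|[Hsv| ->]].
    + apply pair_pow_gap_inner; auto; lra.
    + destruct (Rle_or_lt sg u).
      * apply pair_pow_gap_outer; auto; destruct Hs; lra.
      * pose proof (pair_pow_gap_to_edge sg u ltac:(lra)).
        pose proof (pair_pow_gap_outer sg sg v ltac:(lra) ltac:(destruct Hs; lra)).
        nra.
    + apply pair_pow_gap_to_edge; auto.
Qed.

End Growth.

(* Near the diagonal (t < sg) only the second-order growth is available:
   a window of height d in pair_pow confines t to a window of width
   bad_const a d * sg ^ (1 - a / 2). *)
Definition bad_const (a d : R) : R := 8 * d / (a * (a - 1)) + 1.

Lemma bad_const_pos a d : 1 < a -> 0 <= d -> 0 < bad_const a d.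
Proof.
  intros; unfold bad_const.
  assert (0 <= 8 * d / (a * (a - 1)))
    by (apply Rmult_le_pos; [lra | left; apply Rinv_0_lt_compat; nra]).
  lra.
Qed.

Lemma good_window a c d sg u v : 1 < a <= 2 -> 0 < c < 1 ->
  (sg = 0 \/ 1 <= sg) -> (u = 0 \/ 1 <= u) -> (v = 0 \/ 1 <= v) ->
  c * sg <= u -> c * sg <= v ->
  Rabs (pair_pow a sg u - pair_pow a sg v) <= d -> Rabs (u - v) <= d / good_slope a c.
Proof.
  intros Ha Hc Hs Hu Hv Hcu Hcv H.
  pose proof (good_slope_pos a c Ha Hc) as Hslope.
  destruct (Rtotal_order u v) as [Hlt|[->|Hgt]].
  - pose proof (pair_pow_gap a c Ha Hc sg u v Hs Hu Hlt ltac:(destruct Hv; lra) Hcu).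
    assert (0 < good_slope a c * (v - u)) by (apply Rmult_lt_0_compat; lra).
    rewrite Rabs_left by lra; rewrite Rabs_left1 in H by lra.
    apply (Rmult_le_reg_l (good_slope a c)); auto; field_simplify; lra.
  - rewrite Rminus_diag, Rabs_R0 in *.
    apply Rmult_le_pos; [lra | left; apply Rinv_0_lt_compat; auto].
  - pose proof (pair_pow_gap a c Ha Hc sg v u Hs Hv Hgt ltac:(destruct Hu; lra) Hcv).
    assert (0 < good_slope a c * (u - v)) by (apply Rmult_lt_0_compat; lra).
    rewrite Rabs_right by lra; rewrite Rabs_right in H by lra.
    apply (Rmult_le_reg_l (good_slope a c)); auto; field_simplify; lra.
Qed.

Lemma good_width_nonneg a c d : 1 < a <= 2 -> 0 < c < 1 -> 0 <= d -> 0 <= d / good_slope a c.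
Proof.
  intros Ha Hc Hd; pose proof (good_slope_pos a c Ha Hc).
  apply Rmult_le_pos; [lra | left; apply Rinv_0_lt_compat; lra].
Qed.

(* One-sided form of the near-diagonal estimate: apply the second-order bound
   on the upper half [(u + v) / 2, v] of the interval. *)
Lemma bad_window_ordered a d sg u v : 1 < a <= 2 -> 0 <= d -> 0 <= u < v -> v < sg ->
  pair_pow a sg v - pair_pow a sg u <= d -> v - u <= bad_const a d * Rpower sg (1 - a / 2).
Proof.
  intros Ha Hd Huv Hv H.
  set (mid := (u + v) / 2).
  pose proof (pair_pow_second_order a Ha sg mid v ltac:(unfold mid; lra) Hv) as Hhigh.
  pose proof (pair_pow_second_order a Ha sg u mid ltac:(unfold mid; lra) ltac:(unfold mid; lra))
    as Hlow.
  set (R2 := Rpower sg (a - 1 - 1)) in *; set (E := Rpower sg (1 - a / 2)).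
  assert (HR : 0 < R2) by apply Rpower_pos. assert (HE : 0 < E) by apply Rpower_pos.
  assert (HRE : R2 * (E * E) = 1).
  { unfold R2, E; rewrite <- !Rpower_plus.
    replace (a - 1 - 1 + (1 - a / 2 + (1 - a / 2))) with 0 by field.
    apply Rpower_O; lra. }
  assert (Ha1 : 0 < a * (a - 1)) by nra.
  assert (0 <= a * (a - 1) * R2 * u * ((mid - u) / 2)).
  { assert (0 <= a * (a - 1) * R2) by nra. repeat apply Rmult_le_pos; unfold mid; lra. }
  set (D := v - u).
  assert (a * (a - 1) * R2 * mid * ((v - mid) / 2) >= a * (a - 1) * R2 * (D * D) / 8).
  { assert (0 <= a * (a - 1) * R2) by nra. unfold mid, D.
    assert (0 <= a * (a - 1) * R2 * u * (v - u)) by (repeat apply Rmult_le_pos; lra).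
    nra. }
  assert (Hsq : a * (a - 1) * (D * D) <= 8 * d * (E * E)).
  { assert (a * (a - 1) * R2 * (D * D) <= 8 * d) by lra.
    assert (0 <= E * E) by nra.
    replace (a * (a - 1) * (D * D)) with (a * (a - 1) * R2 * (D * D) * (E * E))
      by (transitivity (a * (a - 1) * (D * D) * (R2 * (E * E))); [ring | rewrite HRE; ring]).
    nra. }
  assert (Hsq' : D * D <= (8 * d / (a * (a - 1))) * (E * E)).
  { apply (Rmult_le_reg_l (a * (a - 1))); auto; field_simplify; lra. }
  assert (8 * d / (a * (a - 1)) <= bad_const a d * bad_const a d).
  { unfold bad_const.
    assert (0 <= 8 * d / (a * (a - 1)))
      by (apply Rmult_le_pos; [lra | left; apply Rinv_0_lt_compat; lra]).
    nra. }
  pose proof (bad_const_pos a d (proj1 Ha) Hd).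
  assert (D * D <= (bad_const a d * E) * (bad_const a d * E)) by (assert (0 <= E * E) by nra; nra).
  assert (0 <= D) by (unfold D; lra).
  assert (0 <= bad_const a d * E) by nra.
  fold D; nra.
Qed.

Lemma bad_window a d sg u v : 1 < a <= 2 -> 0 <= d -> 0 <= u -> 0 <= v -> u < sg -> v < sg ->
  Rabs (pair_pow a sg u - pair_pow a sg v) <= d ->
  Rabs (u - v) <= bad_const a d * Rpower sg (1 - a / 2).
Proof.
  intros Ha Hd Hu Hv Hus Hvs H.
  pose proof (Rle_abs (pair_pow a sg u - pair_pow a sg v)).
  pose proof (Rle_abs (- (pair_pow a sg u - pair_pow a sg v))).
  rewrite Rabs_Ropp in *.
  destruct (Rtotal_order u v) as [Hlt|[->|Hgt]].
  - rewrite Rabs_left by lra.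
    pose proof (bad_window_ordered a d sg u v Ha Hd ltac:(lra) Hvs ltac:(lra)); lra.
  - rewrite Rminus_diag, Rabs_R0; left.
    apply Rmult_lt_0_compat; [apply bad_const_pos; lra | apply Rpower_pos].
  - rewrite Rabs_right by lra.
    pose proof (bad_window_ordered a d sg v u Ha Hd ltac:(lra) Hus ltac:(lra)); lra.
Qed.

Definition zrange (lo : Z) (n : nat) : list Z :=
  map (fun i => (lo + Z.of_nat i)%Z) (seq 0 n).

Lemma in_zrange lo n y : (lo <= y < lo + Z.of_nat n)%Z -> In y (zrange lo n).
Proof.
  intros H; unfold zrange; apply in_map_iff; exists (Z.to_nat (y - lo)); split.
  - rewrite Z2Nat.id; lia.
  - apply in_seq; lia.
Qed.

Lemma length_zrange lo n : length (zrange lo n) = n.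
Proof. unfold zrange; rewrite length_map, length_seq; reflexivity. Qed.

Lemma card_le_mono A C1 C2 : card_le A C1 -> C1 <= C2 -> card_le A C2.
Proof. intros H Hc l Hnd Hin; specialize (H l Hnd Hin); lra. Qed.

(* Counting principle: if the second coordinate is determined by the first
   (p = (j, s - j)) and the distances |2j - s| all lie in a window of width M,
   then 2j - s ranges over two integer intervals of length 2M + 1, so the set
   has at most 4M + 6 elements. *)
Lemma card_by_window (A : Z * Z -> Prop) s M : 0 <= M ->
  (forall p, A p -> snd p = (s - fst p)%Z) ->
  (forall p q, A p -> A q ->
     Rabs (IZR (Z.abs (2 * fst p - s)) - IZR (Z.abs (2 * fst q - s))) <= M) ->
  card_le A (4 * M + 6).
Proof.
  intros HM Hsnd Hwin l Hnd Hin.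
  destruct l as [|p0 l']; [simpl; lra|].
  set (t0 := Z.abs (2 * fst p0 - s)).
  set (Mz := up M); destruct (archimed M) as [Hup1 Hup2]; fold Mz in Hup1, Hup2.
  assert (HMz : (0 <= Mz)%Z) by (apply le_IZR; simpl; lra).
  set (ys := map (fun p : Z * Z => (2 * fst p - s)%Z) (p0 :: l')).
  set (n := Z.to_nat (2 * Mz + 1)).
  assert (Hnd' : NoDup ys).
  { apply NoDup_map_NoDup_ForallPairs; auto.
    intros [x1 y1] [x2 y2] H1 H2 E; cbn [fst snd] in E.
    pose proof (Hsnd _ (Hin _ H1)); pose proof (Hsnd _ (Hin _ H2)); cbn [fst snd] in *.
    f_equal; lia. }
  assert (Hincl : incl ys (zrange (t0 - Mz) n ++ zrange (- t0 - Mz) n)).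
  { intros y Hy; unfold ys in Hy; apply in_map_iff in Hy; destruct Hy as [p [Ey Hp]].
    pose proof (Hwin _ _ (Hin _ Hp) (Hin _ (or_introl eq_refl))) as Hq.
    fold t0 in Hq; rewrite <- minus_IZR, Rabs_Zabs in Hq.
    assert (Hlt : (Z.abs (Z.abs (2 * fst p - s) - t0) < Mz)%Z) by (apply lt_IZR; lra).
    rewrite Ey in Hlt; apply in_or_app; unfold n.
    destruct (Z.abs_spec y) as [[Hy1 Hy2]|[Hy1 Hy2]]; rewrite Hy2 in Hlt;
      [left | right]; apply in_zrange; rewrite Z2Nat.id by lia; lia. }
  pose proof (NoDup_incl_length Hnd' Hincl) as Hlen.
  rewrite length_app, !length_zrange in Hlen; unfold ys in Hlen; rewrite length_map in Hlen.
  apply le_INR in Hlen; rewrite plus_INR in Hlen; unfold n in Hlen.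
  rewrite !(INR_IZR_INZ (Z.to_nat (2 * Mz + 1))), Z2Nat.id in Hlen by lia.
  rewrite plus_IZR, mult_IZR in Hlen; simpl in Hlen |- *; lra.
Qed.

(* A pair p = (j, s - j) whose resonance function |j| ^ a + |s - j| ^ a lies
   within C0 of the level E. Both fibres S_{kk2} and S_{k1k3} consist of such
   pairs, with s = k + k2 resp. s = k1 + k3. *)
Definition resonant (a C0 : R) (s : Z) (E : R) (p : Z * Z) : Prop :=
  snd p = (s - fst p)%Z /\ Rabs (zpow (fst p) a + zpow (snd p) a - E) <= C0.

Definition near_diag (c : R) (s j : Z) : Prop :=
  Rabs (IZR (2 * j - s)) < c * Rabs (IZR s).

Lemma inS_kk2_resonant a C0 m N N1 N2 N3 k k1 k2 k3 :
  inS a C0 m N N1 N2 N3 k k1 k2 k3 ->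
  resonant a C0 (k + k2) (zpow k a + zpow k2 a + m) (k1, k3).
Proof.
  intros [Hk [_ [_ [H _]]]]; split; cbn [fst snd]; [lia|].
  replace (zpow k1 a + zpow k3 a - (zpow k a + zpow k2 a + m))
    with (zpow k1 a - zpow k2 a + zpow k3 a - zpow k a - m) by ring.
  exact H.
Qed.

Lemma inS_k1k3_resonant a C0 m N N1 N2 N3 k k1 k2 k3 :
  inS a C0 m N N1 N2 N3 k k1 k2 k3 ->
  resonant a C0 (k1 + k3) (zpow k1 a + zpow k3 a - m) (k, k2).
Proof.
  intros [Hk [_ [_ [H _]]]]; split; cbn [fst snd]; [lia|].
  rewrite <- Rabs_Ropp.
  replace (- (zpow k a + zpow k2 a - (zpow k1 a + zpow k3 a - m)))
    with (zpow k1 a - zpow k2 a + zpow k3 a - zpow k a - m) by ring.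
  exact H.
Qed.

Lemma resonant_close a C0 s E p q : resonant a C0 s E p -> resonant a C0 s E q ->
  Rabs (pair_pow a (IZR (Z.abs s)) (IZR (Z.abs (2 * fst p - s)))
        - pair_pow a (IZR (Z.abs s)) (IZR (Z.abs (2 * fst q - s)))) <= 2 * C0.
Proof.
  intros [Hp Rp] [Hq Rq].
  rewrite <- !zpow_pair, <- Hp, <- Hq.
  replace (zpow (fst p) a + zpow (snd p) a - (zpow (fst q) a + zpow (snd q) a))
    with ((zpow (fst p) a + zpow (snd p) a - E) - (zpow (fst q) a + zpow (snd q) a - E))
    by ring.
  eapply Rle_trans; [apply Rabs_triang|]; rewrite Rabs_Ropp; lra.
Qed.

Lemma IZR_natlike z : (0 <= z)%Z -> IZR z = 0 \/ 1 <= IZR z.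
Proof. intros; destruct (Z.eq_dec z 0) as [->|]; [left; reflexivity | right; apply IZR_le; lia]. Qed.

Lemma card_good a c C0 s E (A : Z * Z -> Prop) : 1 < a <= 2 -> 0 < c < 1 -> 0 < C0 ->
  (forall p, A p -> resonant a C0 s E p /\ ~ near_diag c s (fst p)) ->
  card_le A (4 * (2 * C0 / good_slope a c) + 6).
Proof.
  intros Ha Hc HC0 HA.
  apply card_by_window with (s := s).
  - apply good_width_nonneg; lra.
  - intros p Hp; apply (HA p Hp).
  - intros p q Hp Hq.
    destruct (HA p Hp) as [Rp Gp], (HA q Hq) as [Rq Gq].
    unfold near_diag in Gp, Gq; rewrite !Rabs_Zabs in Gp, Gq.
    apply (good_window a c (2 * C0) (IZR (Z.abs s))); auto;
      try (apply IZR_natlike; lia); try lra.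
    apply resonant_close with (E := E); auto.
Qed.

Lemma card_bad a c C0 s E (A : Z * Z -> Prop) : 1 < a <= 2 -> 0 < c < 1 -> 0 < C0 ->
  (forall p, A p -> resonant a C0 s E p /\ near_diag c s (fst p)) ->
  card_le A (4 * (bad_const a (2 * C0) * zpow s (1 - a / 2)) + 6).
Proof.
  intros Ha Hc HC0 HA.
  apply card_by_window with (s := s).
  - apply Rmult_le_pos; [left; apply bad_const_pos; lra | apply zpow_nonneg].
  - intros p Hp; apply (HA p Hp).
  - intros p q Hp Hq.
    destruct (HA p Hp) as [Rp Bp], (HA q Hq) as [Rq Bq].
    unfold near_diag in Bp, Bq; rewrite !Rabs_Zabs in Bp, Bq.
    assert (0 <= IZR (Z.abs (2 * fst p - s))) by (apply IZR_le; lia).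
    assert (0 <= IZR (Z.abs (2 * fst q - s))) by (apply IZR_le; lia).
    assert (0 < IZR (Z.abs s)) by nra.
    replace (zpow s (1 - a / 2)) with (Rpower (IZR (Z.abs s)) (1 - a / 2)).
    + apply bad_window; try lra; try nra.
      apply resonant_close with (E := E); auto.
    + unfold zpow; destruct (Z.eqb_spec s 0) as [->|]; [simpl in *; lra | reflexivity].
Qed.

Definition fibre_const (a c C0 : R) : R :=
  4 * (2 * C0 / good_slope a c) + 4 * bad_const a (2 * C0) + 6.

Lemma fibre_const_pos a c C0 : 1 < a <= 2 -> 0 < c < 1 -> 0 < C0 -> 0 < fibre_const a c C0.
Proof.
  intros Ha Hc HC0; unfold fibre_const.
  assert (0 <= 2 * C0 / good_slope a c) by (apply good_width_nonneg; lra).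
  assert (0 < bad_const a (2 * C0)) by (apply bad_const_pos; lra).
  lra.
Qed.

Lemma fibre_card a c C0 s E (Agood Abad : Z * Z -> Prop) :
  1 < a <= 2 -> 0 < c < 1 -> 0 < C0 ->
  (forall p, Agood p -> resonant a C0 s E p /\ ~ near_diag c s (fst p)) ->
  (forall p, Abad p -> resonant a C0 s E p /\ near_diag c s (fst p)) ->
  card_le Agood (fibre_const a c C0) /\
  card_le Abad (fibre_const a c C0 * (zpow s (1 - a / 2) + 1)).
Proof.
  intros Ha Hc HC0 Hgood Hbad.
  assert (0 <= 2 * C0 / good_slope a c) by (apply good_width_nonneg; lra).
  assert (0 < bad_const a (2 * C0)) by (apply bad_const_pos; lra).
  pose proof (zpow_nonneg s (1 - a / 2)).
  unfold fibre_const; split.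
  - eapply card_le_mono; [apply (card_good a c C0 s E); auto | lra].
  - eapply card_le_mono; [apply (card_bad a c C0 s E); auto | nra].
Qed.

Theorem lemma2p7 (alpha c C0 : R)
  (halpha : 1 < alpha < 2) (hc : 0 < c < 1) (hC0 : 0 < C0) :
  exists C : R, 0 < C /\
  forall (N N1 N2 N3 : Z) (m : R),
    dyadic N -> dyadic N1 -> dyadic N2 -> dyadic N3 ->
    (1 <= N1 <= N)%Z -> (1 <= N2 <= N)%Z -> (1 <= N3 <= N)%Z ->
    (forall k k2 : Z,
       card_le (S_kk2_good alpha C0 m N N1 N2 N3 c k k2) C /\
       card_le (S_kk2_bad alpha C0 m N N1 N2 N3 c k k2)
         (C * (zpow (k + k2) (1 - alpha / 2) + 1))) /\
    (forall k1 k3 : Z,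
       card_le (S_k1k3_good alpha C0 m N N1 N2 N3 c k1 k3) C /\
       card_le (S_k1k3_bad alpha C0 m N N1 N2 N3 c k1 k3)
         (C * (zpow (k1 + k3) (1 - alpha / 2) + 1))).
Proof.
  assert (Ha : 1 < alpha <= 2) by lra.
  exists (fibre_const alpha c C0); split; [apply fibre_const_pos; auto|].
  intros N N1 N2 N3 m _ _ _ _ _ _ _; split; intros x y.
  -
    apply (fibre_card alpha c C0 (x + y) (zpow x alpha + zpow y alpha + m)); auto;
      intros [k1 k3] [HS Hdiag]; split; auto; eapply inS_kk2_resonant; eauto.
  -
    apply (fibre_card alpha c C0 (x + y) (zpow x alpha + zpow y alpha - m)); auto;
      intros [k k2] [HS Hdiag]; split; auto; eapply inS_k1k3_resonant; eauto.
Qed.
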